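(* Let $G=(V,E)$ be a finite graph with special vertex $i$, symmetric edge weights $w_E$ (with $w_E(u,v)=0$ for $uv\notin E$) and vertex weights $w_V$ (nonnegative, not identically zero). Assume $G$ and $G-i$ are each positively connected. Let $f_i$ be a solution of $$\min_{\|g\|_w=1,\ g(i)=0}\ \sum_{jk\in E} w_E(j,k)\,(g(k)-g(j))^2,$$ with sign chosen so that $f_i$ is positive on $V\setminus\{i\}$. Then for every $u\in V\setminus\{i\}$ there exists $u'\in N(u)$ (possibly $u'=i$) with $f_i(u')\le f_i(u)$. Moreover, if $w_V(u)>0$, such $u'$ can be chosen with $f_i(u')<f_i(u)$.
   Context: $\|g\|_w=\sqrt{\sum_{u\in V}w_V(u)g(u)^2}$; each edge is counted once. A weighted graph is positively connected if any two vertices are joined by a path of positive-weight edges; $G-i$ is $G$ with $i$ deleted. Edges of weight zero are regarded as deleted (they do not affect the optimization problem), so $N(u)$ is the set of vertices joined to $u$ by an edge of positive weight. A solution that is positive at some vertex is positive on all of $V\setminus\{i\}$, and the paper always takes this sign. *)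

From mathcomp Require Import all_boot all_order all_algebra.
Set Implicit Arguments. Unset Strict Implicit. Unset Printing Implicit Defensive.
Import Order.TTheory GRing.Theory Num.Theory.
Local Open Scope ring_scope.

Section Defs.
Variables (R : rcfType) (V : finType).

Definition pos_adj (wE : V -> V -> R) : rel V := fun x y => 0 < wE x y.

Definition nbr (wE : V -> V -> R) (u v : V) : bool := (v != u) && (0 < wE u v).

Definition pos_connected_on (wE : V -> V -> R) (A : pred V) : Prop :=
  forall x y, A x -> A y ->
    exists p : seq V, [/\ path (pos_adj wE) x p, last x p = y & all A p].

Definition pos_connected (wE : V -> V -> R) : Prop :=
  pos_connected_on wE predT.

Definition pos_connected_minus (wE : V -> V -> R) (i : V) : Prop :=
  pos_connected_on wE (fun x => x != i).

Definition wnorm (wV : V -> R) (g : V -> R) : R :=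
  Num.sqrt (\sum_(u : V) wV u * g u ^+ 2).

(* sum over edges jk, each edge counted once: half the sum over ordered
   pairs (weights are symmetric and loops contribute 0) *)
Definition energy (wE : V -> V -> R) (g : V -> R) : R :=
  2^-1 * \sum_(j : V) \sum_(k : V) wE j k * (g k - g j) ^+ 2.

Definition is_solution (wE : V -> V -> R) (wV : V -> R) (i : V) (f : V -> R) : Prop :=
  [/\ wnorm wV f = 1, f i = 0 &
      forall g : V -> R, wnorm wV g = 1 -> g i = 0 -> energy wE f <= energy wE g].

End Defs.

From mathcomp Require Import all_boot all_order all_algebra ring lra.
Import Order.TTheory GRing.Theory Num.Theory.
Local Open Scope ring_scope.
Set Implicit Arguments. Unset Strict Implicit.

(* Let lambda = energy f.  For every d with d i = 0, the minimality of f
   makes t |-> energy (f + t d) - lambda ||f + t d||^2 a nonnegative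
   quadratic vanishing at t = 0, so its linear coefficient vanishes.  For d
   the indicator of u <> i this is the Euler-Lagrange equation
     sum_v wE(u,v) (f u - f v) = lambda wV(u) f(u).
   The right side is >= 0, and > 0 when wV(u) > 0 because connectivity forces
   lambda > 0; so f u can be neither strictly below all its neighbours, nor,
   when wV(u) > 0, weakly below all of them. *)

Lemma quadratic_ge0_linear_coef_eq0 (R : realFieldType) (a b : R) :
  (forall t, 0 <= b * t + a * t ^+ 2) -> b = 0.
Proof.
move=> ge0; apply/eqP; apply: contraT => b_neq0.
set c := `|a| + 1.
have c_gt0 : 0 < c by rewrite ltr_wpDl.
have a_lt_c : a < c by rewrite (le_lt_trans (real_ler_norm (num_real a))) ?ltrDl.
have := ge0 (- b / c).
have -> : b * (- b / c) + a * (- b / c) ^+ 2 = (b / c) ^+ 2 * (a - c).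
  by field; rewrite gt_eqF.
have sqr_gt0 : 0 < (b / c) ^+ 2.
  by rewrite lt_def sqr_ge0 sqrf_eq0 andbT mulf_neq0 // invr_eq0 gt_eqF.
by rewrite pmulr_rge0 // subr_ge0 leNgt a_lt_c.
Qed.

Section Energy.
Variables (R : rcfType) (V : finType) (wE : V -> V -> R) (wV : V -> R).
Hypothesis wE_sym : forall u v, wE u v = wE v u.
Hypothesis wE_ge0 : forall u v, 0 <= wE u v.

Definition wnorm2 (g : V -> R) : R := \sum_(u : V) wV u * g u ^+ 2.

Definition wdot (g h : V -> R) : R := \sum_(u : V) wV u * g u * h u.

Definition energy_form (g h : V -> R) : R :=
  \sum_(j : V) \sum_(k : V) wE j k * (g k - g j) * (h k - h j).

Definition laplacian (g : V -> R) (u : V) : R :=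
  \sum_(v : V) wE u v * (g u - g v).

Lemma wnorm2_eq1 g : wnorm wV g = 1 -> wnorm2 g = 1.
Proof.
rewrite /wnorm -/(wnorm2 g) => g1.
have : ~~ (wnorm2 g <= 0) by rewrite -sqrtr_eq0 g1 oner_eq0.
by rewrite -ltNge => /ltW/sqr_sqrtr <-; rewrite g1 expr1n.
Qed.

Lemma energy_ge0 g : 0 <= energy wE g.
Proof.
rewrite /energy mulr_ge0 ?invr_ge0 ?ler0n //.
by do 2!(apply: sumr_ge0 => ? _); rewrite mulr_ge0 ?sqr_ge0.
Qed.

Lemma energy_scale c g : energy wE (fun v => c * g v) = c ^+ 2 * energy wE g.
Proof.
rewrite /energy mulrCA; congr (_ * _); rewrite mulr_sumr; apply: eq_bigr => j _.
by rewrite mulr_sumr; apply: eq_bigr => k _; ring.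
Qed.

Lemma wnorm2_scale c g : wnorm2 (fun v => c * g v) = c ^+ 2 * wnorm2 g.
Proof. by rewrite /wnorm2 mulr_sumr; apply: eq_bigr => v _; ring. Qed.

Lemma energy_shift f d t :
  energy wE (fun v => f v + t * d v)
  = energy wE f + t * energy_form f d + t ^+ 2 * energy wE d.
Proof.
rewrite /energy /energy_form !mulr_sumr -!big_split /=; apply: eq_bigr => j _.
by rewrite !mulr_sumr -!big_split; apply: eq_bigr => k _ /=; field.
Qed.

Lemma wnorm2_shift f d t :
  wnorm2 (fun v => f v + t * d v)
  = wnorm2 f + t * (2 * wdot f d) + t ^+ 2 * wnorm2 d.
Proof.
rewrite /wnorm2 /wdot mulr_sumr !mulr_sumr -!big_split /=.
by apply: eq_bigr => v _; ring.
Qed.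

Lemma energy_form_laplacian f d :
  energy_form f d = 2 * \sum_(j : V) laplacian f j * d j.
Proof.
have head : \sum_(j : V) \sum_(k : V) wE j k * (f k - f j) * d k
            = \sum_(j : V) laplacian f j * d j.
  rewrite exchange_big; apply: eq_bigr => j _; rewrite /laplacian mulr_suml.
  by apply: eq_bigr => k _; rewrite wE_sym.
have tail : \sum_(j : V) \sum_(k : V) wE j k * (f k - f j) * d j
            = - \sum_(j : V) laplacian f j * d j.
  rewrite -sumrN; apply: eq_bigr => j _; rewrite /laplacian mulr_suml -sumrN.
  by apply: eq_bigr => k _; ring.
transitivity (\sum_(j : V) \sum_(k : V) wE j k * (f k - f j) * d k
              - \sum_(j : V) \sum_(k : V) wE j k * (f k - f j) * d j).
  rewrite -sumrB; apply: eq_bigr => j _; rewrite -sumrB.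
  by apply: eq_bigr => k _; ring.
by rewrite head tail; ring.
Qed.

Lemma sum_mul_delta (F : V -> R) u : \sum_(v : V) F v * (v == u)%:R = F u.
Proof.
rewrite (bigD1 u) //= eqxx mulr1 big1 ?addr0 // => v /negbTE ->.
by rewrite mulr0.
Qed.

Section Minimiser.
Variables (i : V) (f : V -> R).
Hypothesis f_sol : is_solution wE wV i f.

Lemma rayleigh_le g : g i = 0 -> energy wE f * wnorm2 g <= energy wE g.
Proof.
move=> gi; have [_ _ f_min] := f_sol.
have [g_le0 | g_gt0] := lerP (wnorm2 g) 0.
  by apply: le_trans (energy_ge0 g); rewrite mulr_ge0_le0 ?energy_ge0.
set s := Num.sqrt (wnorm2 g).
have s2 : s ^+ 2 = wnorm2 g by rewrite sqr_sqrtr ?ltW.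
have s_neq0 : s != 0 by rewrite sqrtr_eq0 -ltNge.
have wnorm_rescaled : wnorm wV (fun v => s^-1 * g v) = 1.
  by rewrite /wnorm -/(wnorm2 _) wnorm2_scale -s2 exprVn mulVf ?expf_neq0 ?sqrtr1.
have := f_min _ wnorm_rescaled; rewrite gi mulr0 => /(_ erefl); rewrite energy_scale -s2 => le_f.
apply: le_trans (ler_wpM2r (sqr_ge0 s) le_f) _.
by rewrite mulrAC exprVn mulVf ?expf_neq0 ?mul1r.
Qed.

Lemma energy_form_minimiser d :
  d i = 0 -> energy_form f d = 2 * energy wE f * wdot f d.
Proof.
move=> di; have [f1 fi _] := f_sol.
apply/eqP; rewrite -subr_eq0; apply/eqP.
apply: (@quadratic_ge0_linear_coef_eq0 _ (energy wE d - energy wE f * wnorm2 d)).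
move=> t; have := @rayleigh_le (fun v => f v + t * d v).
rewrite fi di mulr0 addr0 => /(_ erefl).
rewrite energy_shift wnorm2_shift (wnorm2_eq1 f1) => le_f.
lra.
Qed.

Lemma laplacian_minimiser u :
  u != i -> laplacian f u = energy wE f * (wV u * f u).
Proof.
move=> ui; pose d v : R := (v == u)%:R.
have := @energy_form_minimiser d; rewrite /d eq_sym (negbTE ui) => /(_ erefl).
rewrite energy_form_laplacian /wdot sum_mul_delta.
rewrite (sum_mul_delta (fun v => wV v * f v)) -mulrA.
by apply: mulfI; rewrite pnatr_eq0.
Qed.

End Minimiser.
End Energy.

Section Graph.
Variables (R : rcfType) (V : finType) (wE : V -> V -> R).
Hypothesis wE_ge0 : forall u v, 0 <= wE u v.

Lemma nbr_of_path u p :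
  path (pos_adj wE) u p -> last u p != u -> exists v, nbr wE u v.
Proof.
elim: p => [|x p IHp] /=; first by rewrite eqxx.
move=> /andP[adj_ux path_p] last_p; have [xu | xu] := eqVneq x u.
  by subst x; exact: IHp.
by exists x; apply/andP.
Qed.

Lemma energy_eq0_adj g j k : energy wE g = 0 -> pos_adj wE j k -> g k = g j.
Proof.
rewrite /energy => /eqP; rewrite mulf_eq0 invr_eq0 pnatr_eq0 /= => /eqP E0 adj.
have term_ge0 j' k' : 0 <= wE j' k' * (g k' - g j') ^+ 2.
  by rewrite mulr_ge0 ?sqr_ge0.
have Ej := psumr_eq0P (fun j' _ => sumr_ge0 _ (fun k' _ => term_ge0 j' k')) E0 (i := j) isT.
have /eqP := psumr_eq0P (fun k' _ => term_ge0 j k') Ej (i := k) isT.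
by rewrite mulf_eq0 (gt_eqF adj) sqrf_eq0 subr_eq0 => /eqP.
Qed.

Lemma energy_eq0_path g x p :
  energy wE g = 0 -> path (pos_adj wE) x p -> g (last x p) = g x.
Proof.
move=> E0; elim: p x => [|y p IHp] x //= /andP[adj_xy path_p].
by rewrite IHp // (energy_eq0_adj E0 adj_xy).
Qed.

Lemma energy_gt0 g x y : pos_connected wE -> g x != g y -> 0 < energy wE g.
Proof.
move=> conn gxy; rewrite lt_def energy_ge0 // andbT; apply/eqP => E0.
have [p [path_p last_p _]] := conn x y isT isT.
by move: gxy; rewrite -last_p (energy_eq0_path E0 path_p) eqxx.
Qed.

Section Laplacian.
Variables (f : V -> R) (u : V).
Hypothesis f_nbr_ge : forall v, nbr wE u v -> f u <= f v.

Lemma laplacian_term_le0 v : wE u v * (f u - f v) <= 0.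
Proof.
have [-> | vu] := eqVneq v u; first by rewrite subrr mulr0.
have := wE_ge0 u v; rewrite le_eqVlt => /predU1P[<- | uv_pos].
  by rewrite mul0r.
by rewrite pmulr_rle0 // subr_le0 f_nbr_ge // /nbr vu.
Qed.

Lemma laplacian_le0 : laplacian wE f u <= 0.
Proof. by apply: sumr_le0 => v _; apply: laplacian_term_le0. Qed.

Lemma laplacian_lt0 w : nbr wE u w -> f u < f w -> laplacian wE f u < 0.
Proof.
move=> /andP[_ uw_pos] fu_lt_fw; rewrite /laplacian (bigD1 w) //=.
have term_lt0 : wE u w * (f u - f w) < 0 by rewrite pmulr_rlt0 // subr_lt0.
have rest_le0 : \sum_(v | v != w) wE u v * (f u - f v) <= 0.
  by apply: sumr_le0 => v _; apply: laplacian_term_le0.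
lra.
Qed.

End Laplacian.
End Graph.

Theorem theorem8 (R : rcfType) (V : finType) (i : V)
    (wE : V -> V -> R) (wV : V -> R)
    (wE_sym : forall u v, wE u v = wE v u)
    (wE_ge0 : forall u v, 0 <= wE u v)
    (wV_ge0 : forall u, 0 <= wV u)
    (wV_nz : exists u, wV u != 0)
    (conG : pos_connected wE)
    (conGi : pos_connected_minus wE i)
    (f : V -> R)
    (f_sol : is_solution wE wV i f)
    (f_pos : forall u, u != i -> 0 < f u) :
  forall u, u != i ->
    (exists u', nbr wE u u' /\ f u' <= f u) /\
    (0 < wV u -> exists u', nbr wE u u' /\ f u' < f u).
Proof.
move=> u ui; have [_ fi _] := f_sol.
have lap_u := laplacian_minimiser wE_sym wE_ge0 f_sol ui.
have [w uw] : exists w, nbr wE u w.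
  have [p [path_p last_p _]] := conG u i isT isT.
  by apply: (nbr_of_path path_p); rewrite last_p eq_sym.
have [w0 uw0 w0_min] := arg_minP f uw.
split; [exists w0 | move=> wVu; exists w0]; split => //.
- rewrite leNgt; apply/negP => fu_lt.
  have f_nbr_ge v (uv : nbr wE u v) := le_trans (ltW fu_lt) (w0_min v uv).
  suff : 0 <= laplacian wE f u by rewrite leNgt (laplacian_lt0 wE_ge0 f_nbr_ge uw0 fu_lt).
  by rewrite lap_u mulr_ge0 ?energy_ge0 // mulr_ge0 // ltW // f_pos.
- rewrite ltNge; apply/negP => fu_le.
  have f_nbr_ge v (uv : nbr wE u v) := le_trans fu_le (w0_min v uv).
  suff : 0 < laplacian wE f u by rewrite ltNge (laplacian_le0 wE_ge0 f_nbr_ge).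
  have energy_f_gt0 : 0 < energy wE f.
    by apply: (energy_gt0 wE_ge0 (x := u) (y := i) conG); rewrite fi gt_eqF ?f_pos.
  by rewrite lap_u mulr_gt0 // mulr_gt0 // f_pos.
Qed.
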